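(* Let $R$ be a commutative ring with identity; for $a\in R$ let $\mathfrak{a}=aR$. The following statements are equivalent: (1) $R$ is reduced (has no nonzero nilpotent elements); (2) $a\Gamma_{a}(R)=0$ for all $a\in R$; (3) $(0:_R a)=(0:_R a^{k})$ for all $a\in R$ and all $k\in\mathbb{Z}^{+}$; (4) $\varinjlim_{k}\operatorname{Hom}_R(R/\mathfrak{a}^{k},R)\cong \operatorname{Hom}_R(R/\mathfrak{a},R)$ for all $a\in R$; (5) $\Gamma_{a}(R)\cong \operatorname{Hom}_R(R/\mathfrak{a},R)$ for all $a\in R$; (6) for all $a\in R$, $0\to \Gamma_{a}(R)\to R\to aR\to 0$ is a short exact sequence, where the first map is the inclusion and the second is $r\mapsto ar$.
   Context: For $a\in R$: $\Gamma_{a}(R)=\{r\in R \mid a^{k}r=0 \text{ for some } k\in\mathbb{Z}^{+}\}$, $a\Gamma_{a}(R)=\{ar \mid r\in \Gamma_a(R)\}$, and $(0:_R a^{k})=\{r\in R\mid a^{k}r=0\}$. *)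

From mathcomp Require Import all_boot all_algebra.
Set Implicit Arguments. Unset Strict Implicit. Unset Printing Implicit Defensive.
Import GRing.Theory.
Local Open Scope ring_scope.

Section Defs.
Variable R : comPzRingType.

Definition reduced : Prop := forall (x : R) (n : nat), x ^+ n = 0 -> x = 0.

Definition Gamma (a : R) (r : R) : Prop := exists k : nat, (0 < k)%N /\ a ^+ k * r = 0.

Definition ann (a : R) (k : nat) (r : R) : Prop := a ^+ k * r = 0.

Definition pow_ideal (a : R) (k : nat) (x : R) : Prop := exists y : R, x = a ^+ k * y.

(* A set-level presentation of an R-module: an ambient carrier with a
   (setoid) equality, zero, addition, scalar action, and a membership
   predicate cutting out the module. *)
Record Rmod := {
  car : Type;
  req : car -> car -> Prop;
  rzero : car;
  radd : car -> car -> car;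
  rscale : R -> car -> car;
  mem : car -> Prop }.

Definition Rmap (M N : Rmod) (f : car M -> car N) : Prop :=
  (forall x, mem x -> mem (f x)) /\
  (forall x y, mem x -> mem y -> req x y -> req (f x) (f y)) /\
  (forall x y, mem x -> mem y -> req (f (radd x y)) (radd (f x) (f y))) /\
  (forall (r : R) x, mem x -> req (f (rscale r x)) (rscale r (f x))).

Definition Riso (M N : Rmod) : Prop :=
  exists f : car M -> car N, Rmap f /\
    (forall x y, mem x -> mem y -> req (f x) (f y) -> req x y) /\
    (forall y, mem y -> exists2 x, mem x & req (f x) y).

Definition short_exact (A B C : Rmod) (f : car A -> car B) (g : car B -> car C)
  : Prop :=
  Rmap f /\ Rmap g /\
  (forall x y, mem x -> mem y -> req (f x) (f y) -> req x y) /\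
  (forall z, mem z -> exists2 y, mem y & req (g y) z) /\
  (forall y, mem y -> (req (g y) (rzero C) <-> exists2 x, mem x & req (f x) y)).

Definition subR (P : R -> Prop) : Rmod :=
  {| car := R; req := @eq R; rzero := 0; radd := +%R; rscale := *%R; mem := P |}.

(* Hom_R(R/I, R), identified (via the universal property of the quotient)
   with the R-linear maps R -> R vanishing on the ideal I; pointwise
   operations, extensional equality. *)
Definition hom_quot_mem (I : R -> Prop) (f : R -> R) : Prop :=
  (forall x y, f (x + y) = f x + f y) /\
  (forall r x, f (r * x) = r * f x) /\
  (forall x, I x -> f x = 0).

Definition HomQuot (I : R -> Prop) : Rmod :=
  {| car := R -> R;
     req := fun f g => forall x, f x = g x;
     rzero := fun _ => 0;
     radd := fun f g x => f x + g x;
     rscale := fun r f x => r * f x;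
     mem := hom_quot_mem I |}.

(* The transition map Hom_R(R/a^k R, R) -> Hom_R(R/a^m R, R) (k <= m) of the
   direct system: precomposition with the canonical projection
   R/a^m R -> R/a^k R; under the identification above (maps R -> R) this
   projection lifts to the identity of R. *)
Definition hom_trans (k m : nat) (f : R -> R) : R -> R := fun x => f x.

(* The direct limit  lim_k Hom_R(R/a^k R, R): pairs (k, f) with
   f in Hom_R(R/a^k R, R), identified when they agree at some later stage. *)
Definition HomLim (a : R) : Rmod :=
  {| car := (nat * (R -> R))%type;
     req := fun p q => exists m : nat, (p.1 <= m)%N /\ (q.1 <= m)%N /\
              forall x, hom_trans p.1 m p.2 x = hom_trans q.1 m q.2 x;
     rzero := (0%N, fun _ => 0);
     radd := fun p q => (maxn p.1 q.1,
                         fun x => hom_trans p.1 (maxn p.1 q.1) p.2 x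
                                + hom_trans q.1 (maxn p.1 q.1) q.2 x);
     rscale := fun r p => (p.1, fun x => r * p.2 x);
     mem := fun p => hom_quot_mem (pow_ideal a p.1) p.2 |}.

End Defs.

From Pilot Require Import Defs.
From mathcomp Require Import all_boot all_algebra.
Local Open Scope ring_scope.
Import GRing.Theory.

(* Everything is reduced to (2): in a reduced ring a^k r = 0 gives (a r)^k = 0,
   hence a r = 0, while x^n = 0 puts 1 in Gamma_x(R).  An R-linear map R -> R
   is multiplication by its value at 1, and one vanishing on aR takes values
   killed by a; so Hom_R(R/aR, R) is killed by a, and so is any module
   isomorphic to it.  Applied to the class of t |-> t r in the direct limit, or
   to r itself in Gamma_a(R), this gives a r = 0 for r in Gamma_a(R). *)

Section Reduced.
Variable R : comPzRingType.
Implicit Types (a c r : R) (I : R -> Prop) (h : R -> R).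

Lemma reduced_pow_ann {a r k} : reduced R -> a ^+ k * r = 0 -> a * r = 0.
Proof.
case: k => [|k] red; first by rewrite expr0 mul1r => ->; rewrite mulr0.
by move=> akr; apply: (red _ k.+1); rewrite exprMn [r ^+ _]exprS mulrA akr mul0r.
Qed.

Lemma reducedP : reduced R <-> forall a r, Gamma a r -> a * r = 0.
Proof.
split=> [red a r [k [_ akr]] | GammaP x [|n] xn0].
- exact: reduced_pow_ann red akr.
- by rewrite -[x]mulr1 -(expr0 x) xn0 mulr0.
- by rewrite -[x]mulr1; apply: GammaP; exists n.+1; rewrite mulr1.
Qed.

Lemma GammaMl {a} c {r} : Gamma a r -> Gamma a (c * r).
Proof. by move=> [k [k_gt0 akr]]; exists k; rewrite mulrCA akr mulr0. Qed.

Lemma hom_quot_mulr1 {I h} : hom_quot_mem I h -> forall t, h t = t * h 1.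
Proof. by move=> [_ [hM _]] t; rewrite -hM mulr1. Qed.

Lemma hom_quot_mem_mulr I r :
  (forall x, I x -> x * r = 0) -> hom_quot_mem I (fun t => t * r).
Proof.
by move=> Ir; split=> [x y|]; [rewrite mulrDl | split=> [c x|//]; rewrite mulrA].
Qed.

Lemma hom_quot_memZ {I} c {h} :
  hom_quot_mem I h -> hom_quot_mem I (fun t => c * h t).
Proof.
move=> [hD [hM hI]]; split=> [x y|]; first by rewrite hD mulrDr.
by split=> [r x|x /hI ->]; rewrite ?mulr0 // hM mulrCA.
Qed.

Lemma hom_quot_pow_ann {a k h} :
  hom_quot_mem (pow_ideal a k) h -> forall t, a ^+ k * h t = 0.
Proof. by move=> hm t; case: (hm) => [_ [<- ->]] //; exists t. Qed.

(* Compared with [rscale 0 x] rather than [rzero M]: an [Rmap] need not send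
   [rzero] to [rzero]. *)
Lemma Riso_HomQuot_scale {M : Rmod R} {a} (x : car M) :
  Riso M (HomQuot (pow_ideal a 1)) ->
  Defs.mem x -> Defs.mem (rscale a x) -> Defs.mem (rscale 0 x) ->
  req (rscale a x) (rscale 0 x).
Proof.
move=> [f [[fmem [_ [_ fZ]]] [finj _]]] Mx Max M0x.
apply: finj => // t; rewrite (fZ _ _ Mx t) (fZ _ _ Mx t) /= mul0r.
by rewrite -(expr1 a); apply: hom_quot_pow_ann (fmem _ Mx) t.
Qed.

Lemma reduced_iff_ann_pow :
  reduced R <-> forall a k, (0 < k)%N -> forall r, ann a 1 r <-> ann a k r.
Proof.
split=> [/reducedP GammaP a [|k] // _ r | annP].
  rewrite /ann expr1; split=> [ar0 | akr]; last by apply: GammaP; exists k.+1.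
  by rewrite exprSr -mulrA ar0 mulr0.
apply/reducedP => a r [k [k_gt0 akr]].
by have /(_ r) [_] := annP a k k_gt0; rewrite /ann expr1; apply.
Qed.

Lemma HomLim_Riso_HomQuot a :
  reduced R -> Riso (HomLim a) (HomQuot (pow_ideal a 1)).
Proof.
move=> red; exists snd; split; [split; [|split; [|split]] | split].
- move=> [k h] /= hm; have [hD [hM _]] := hm; split=> //; split=> // _ [y ->].
  rewrite expr1 (hom_quot_mulr1 hm) -mulrA mulrCA.
  by rewrite (reduced_pow_ann red (hom_quot_pow_ann hm 1)) mulr0.
- by move=> [k f] [l g] _ _ [m [_ [_ fg]]].
- by [].
- by [].
- by move=> [k f] [l g] _ _ fg; exists (maxn k l); rewrite leq_maxl leq_maxr.
- by move=> h hm; exists (1%N, h).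
Qed.

Lemma HomLim_Riso_Gamma_ann a r :
  Riso (HomLim a) (HomQuot (pow_ideal a 1)) -> Gamma a r -> a * r = 0.
Proof.
move=> iso [k [_ akr]].
have hr : hom_quot_mem (pow_ideal a k) (fun t => t * r).
  by apply: hom_quot_mem_mulr => _ [y ->]; rewrite mulrAC akr mul0r.
have [m [_ [_ ar0]]] := Riso_HomQuot_scale (M := HomLim a)
  (k, fun t => t * r) iso hr (hom_quot_memZ a hr) (hom_quot_memZ 0 hr).
by have := ar0 1; rewrite /hom_trans /= !mul1r mul0r.
Qed.

Lemma Gamma_Riso_HomQuot a :
  reduced R -> Riso (subR (Gamma a)) (HomQuot (pow_ideal a 1)).
Proof.
move=> /reducedP GammaP; exists (fun r t => t * r).
split; [split; [|split; [|split]] | split].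
- move=> r /= ga; apply: hom_quot_mem_mulr => _ [y ->].
  by rewrite expr1 mulrAC (GammaP _ _ ga) mul0r.
- by move=> r s _ _ ->.
- by move=> r s _ _ t /=; rewrite mulrDr.
- by move=> c r _ t /=; rewrite mulrCA.
- by move=> r s _ _ /(_ 1); rewrite !mul1r.
- move=> h hm; exists (h 1); last by move=> t /=; rewrite -(hom_quot_mulr1 hm).
  by exists 1%N; split=> //; apply: hom_quot_pow_ann hm 1.
Qed.

Lemma Gamma_Riso_Gamma_ann a r :
  Riso (subR (Gamma a)) (HomQuot (pow_ideal a 1)) -> Gamma a r -> a * r = 0.
Proof.
move=> iso ga.
have /= := Riso_HomQuot_scale (M := subR (Gamma a)) r iso ga
  (GammaMl a ga) (GammaMl 0 ga).
by rewrite mul0r.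
Qed.

Lemma Gamma_short_exact a : reduced R ->
  short_exact (A := subR (Gamma a)) (B := subR (fun _ => True))
              (C := subR (pow_ideal a 1)) (fun r => r) (fun r => a * r).
Proof.
move=> /reducedP GammaP; split=> //.
split; [split; [|split; [|split]] | split].
- by move=> y _; exists y; rewrite expr1.
- by move=> r s _ _ ->.
- by move=> r s _ _ /=; rewrite mulrDr.
- by move=> c r _ /=; rewrite mulrCA.
- by [].
split=> [_ [y ->] | y _]; first by exists y; rewrite ?expr1.
split=> [ay0 | [r ga <-]]; last exact: GammaP.
by exists y => //; exists 1%N; rewrite expr1.
Qed.

Lemma short_exact_Gamma_ann a r :
  short_exact (A := subR (Gamma a)) (B := subR (fun _ => True))
              (C := subR (pow_ideal a 1)) (fun r => r) (fun r => a * r) ->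
  Gamma a r -> a * r = 0.
Proof. by move=> [_ [_ [_ [_ ker_im]]]] ga; apply/(ker_im r I).2; exists r. Qed.

End Reduced.

Theorem mainTheorem3 (R : comPzRingType) :
  let s1 := reduced R in
  let s2 := forall (a r : R), Gamma a r -> a * r = 0 in
  let s3 := forall (a : R) (k : nat), (0 < k)%N ->
              forall r : R, ann a 1 r <-> ann a k r in
  let s4 := forall a : R, Riso (HomLim a) (HomQuot (pow_ideal a 1)) in
  let s5 := forall a : R, Riso (subR (Gamma a)) (HomQuot (pow_ideal a 1)) in
  let s6 := forall a : R,
      short_exact (A := subR (Gamma a)) (B := subR (fun _ => True))
                  (C := subR (pow_ideal a 1)) (fun r => r) (fun r => a * r) in
  [/\ s1 <-> s2, s1 <-> s3, s1 <-> s4, s1 <-> s5 & s1 <-> s6].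
Proof.
move=> s1 s2 s3 s4 s5 s6; split; [exact: reducedP | exact: reduced_iff_ann_pow | ..].
- split=> [red a | iso]; first exact: HomLim_Riso_HomQuot.
  by apply/reducedP => a r; apply: HomLim_Riso_Gamma_ann.
- split=> [red a | iso]; first exact: Gamma_Riso_HomQuot.
  by apply/reducedP => a r; apply: Gamma_Riso_Gamma_ann.
- split=> [red a | ex]; first exact: Gamma_short_exact.
  by apply/reducedP => a r; apply: short_exact_Gamma_ann.
Qed.
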